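(* Let $K\ge1$ and $T\ge2$ be integers with $N=KT$ odd, let $\eta$ be an integer, and let $a_1,\dots,a_{T-1}$ be binary sequences of period $K$. Let $s=I(0_K,a_1,\dots,a_{T-1})$ and $s'=I(1_K,a_1,\dots,a_{T-1})$ (period $N$), and let $$u=I\big(s',\ L^{4^{-1}+\eta}(s')+1,\ L^{2^{-1}}(s)+1,\ L^{3\cdot 4^{-1}+\eta}(s)+1\big),$$ a binary sequence of period $4N$. For $0\le\mu<4N$ write $\mu=4\mu_1+\mu_2$ with $\mu_2\in\{0,1,2,3\}$, $0\le\mu_1<N$, and set $\tau_2=\langle\mu_1\rangle_T$, $\tau_1^{\pm}=\langle 4^{-1}\pm\eta+\mu_1\rangle_T$, $\tau_2^{\pm}=\langle 3\cdot4^{-1}\pm\eta+\mu_1\rangle_T$. (1) If $d(a_x)=c_1$ for all $x=1,\dots,T-1$ (a constant $c_1$), then $$R_u(\mu)=\begin{cases}4KT&\text{if }\mu=0,\\ 4R_s(\mu_1)&\text{if }\mu_2=0,\ \tau_2=0,\ \mu\ne0,\\ 4R_s(\mu_1)+8c_1&\text{if }\mu_2=0,\ \tau_2\ne0,\\ 0&\text{if }\mu_2=1,\ \tau_1^+=0,\\ -4c_1&\text{if }\mu_2=1,\ \tau_1^+\ne0,\\ 0&\text{if }\mu_2=2,\\ 0&\text{if }\mu_2=3,\ \tau_2^-=0,\\ -4c_1&\text{if }\mu_2=3,\ \tau_2^-\ne0.\end{cases}$$ (2) If $d(a_x)+d(a_{T-x})=0$ for all $x=1,\dots,T-1$, then $$R_u(\mu)=\begin{cases}4KT&\text{if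 }\mu=0,\\ 4R_s(\mu_1)&\text{if }\mu_2=0,\ \mu\ne0,\\ 0&\text{if }\mu_2=1,\ \tau_1^-=0,\\ 4d(a_{\tau_1^-})&\text{if }\mu_2=1,\ \tau_1^-\ne0,\\ 0&\text{if }\mu_2=2,\\ 0&\text{if }\mu_2=3,\ \tau_2^+=0,\\ -4d(a_{\tau_2^+})&\text{if }\mu_2=3,\ \tau_2^+\ne0.\end{cases}$$
   Context: A binary sequence of period $n$ is a map $\mathbb{Z}\to\{0,1\}$ with period $n$ (indices mod $n$). For binary sequences $a,b$ of period $n$, $R_{a,b}(\tau)=\sum_{t=0}^{n-1}(-1)^{a(t)+b(t+\tau)}$ and $R_a=R_{a,a}$. For binary sequences $b_0,\dots,b_{m-1}$ of common period $n$, $I(b_0,\dots,b_{m-1})$ is the binary sequence $v$ of period $nm$ with $v(im+j)=b_j(i)$ for $0\le i\le n-1$, $0\le j\le m-1$. $0_K$, $1_K$ are the all-zero and all-one sequences of period $K$. For a binary sequence $a$ of period $K$, $d(a)=2|\{0\le t\le K-1:a(t)=1\}|-K$. For a sequence $v$ of period $N$ and an integer $m$, $L^m(v)$ is the left shift $L^m(v)(t)=v(t+m)$, and $v+1$ is the complement $t\mapsto v(t)+1 \bmod 2$. Since $N$ is odd, $4^{-1}$ and $2^{-1}$ denote integers with $4\cdot4^{-1}\equiv1$ and $2\cdot2^{-1}\equiv1 \pmod N$ (shifts depend only on their class mod $N$). For an integer $m$, $\langle m\rangle_T\in\{0,\dots,T-1\}$ denotes the residue of $m$ modulo $T$ (well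 defined on classes mod $N$ since $T\mid N$). *)

From mathcomp Require Import all_boot all_order all_algebra.
Set Implicit Arguments. Unset Strict Implicit. Unset Printing Implicit Defensive.
Import Order.TTheory GRing.Theory Num.Theory.
Local Open Scope ring_scope.

(* A binary sequence is a map int -> bool; "period n" is a separate
   hypothesis (periodic n a). All indices are integers. *)
Definition binseq := int -> bool.

Definition periodic (n : nat) (a : binseq) : Prop :=
  forall t : int, a (t + n%:Z) = a t.

Definition corr (n : nat) (a b : binseq) (tau : int) : int :=
  \sum_(t < n) (-1) ^+ addn (nat_of_bool (a t%:Z)) (nat_of_bool (b (t%:Z + tau))).

Definition acorr (n : nat) (a : binseq) (tau : int) : int := corr n a a tau.

(* interleaving I(b_0,...,b_{m-1}) : v(i m + j) = b_j(i) *)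
Definition interleave (m : nat) (b : nat -> binseq) : binseq :=
  fun t => b `|(t %% m%:Z)%Z|%N ((t %/ m%:Z)%Z).

Definition zeros : binseq := fun _ => false.
Definition ones : binseq := fun _ => true.

Definition dbal (K : nat) (a : binseq) : int :=
  2 * (#|[set t : 'I_K | a (nat_of_ord t)%:Z]|)%:Z - K%:Z.

Definition Lsh (m : int) (v : binseq) : binseq := fun t => v (t + m).
Definition cmpl (v : binseq) : binseq := fun t => ~~ v t.

Definition resT (T : nat) (m : int) : int := (m %% T%:Z)%Z.

(* Write (-1)^s for the sign sequence of s.  The sign sequence of s' is
   (-1)^s - 2 * 1_{TZ}, so every correlation involving s' reduces to R_s and to
   the column sums D(c) = sum_{k<K} (-1)^{s(kT+c)}, which equal K on TZ and
   -d(a_<c>_T) elsewhere.  The autocorrelation of the 4-fold interleaving u at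
   mu = 4 mu1 + mu2 is the sum of four cross-correlations of its columns;
   modulo N the column shifts 4^-1 + eta, 2^-1 and 3 * 4^-1 + eta line up, so
   R_u(mu) is an explicit combination of R_s and of D at +-(shift + mu1).  The
   two balance hypotheses give D(-c) = D(c), resp. D(-c) = -D(c) off TZ, and the
   combinations collapse to the stated values. *)

From mathcomp Require Import all_boot all_order all_algebra.
From mathcomp Require Import zify ring.
Import Order.TTheory GRing.Theory Num.Theory.
Set Implicit Arguments. Unset Strict Implicit. Unset Printing Implicit Defensive.
Local Open Scope ring_scope.

Lemma sum_ord_mul (V : nmodType) (m n : nat) (F : nat -> V) :
  \sum_(t < m * n) F t = \sum_(i < n) \sum_(j < m) F (i * m + j)%N.
Proof.
rewrite -(big_mkord xpredT) mulnC big_nat_mul big_mkord; apply: eq_bigr => i _.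
rewrite -{1}[(i * m)%N]add0n big_addn mulSn addnK big_mkord.
by apply: eq_bigr => j _; rewrite addnC.
Qed.

Definition zperiodic (V : Type) (n : nat) (h : int -> V) :=
  forall t : int, h (t + n%:Z) = h t.

Lemma zperiodicMz (V : Type) (n : nat) (h : int -> V) :
  zperiodic n h -> forall k t : int, h (t + k * n%:Z) = h t.
Proof.
move=> hper.
have natMz (k : nat) t : h (t + k%:Z * n%:Z) = h t.
  elim: k t => [|k IHk] t; first by rewrite mul0r addr0.
  by rewrite -addn1 PoszD mulrDl mul1r addrA hper IHk.
case=> k t; first exact: natMz.
by rewrite -(natMz k.+1 (t + Negz k * n%:Z)) NegzE mulNr subrK.
Qed.

Lemma zperiodic_shift (V : Type) (n : nat) (h : int -> V) (c : int) :
  zperiodic n h -> zperiodic n (fun x => h (x + c)).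
Proof. by move=> hper t; rewrite addrAC hper. Qed.

Section PeriodicSums.
Variables (V : nmodType) (n : nat).

Lemma sum_zperiodic_shift1 (h : int -> V) : zperiodic n h ->
  \sum_(t < n) h (t%:Z + 1) = \sum_(t < n) h t%:Z.
Proof.
case: n => [|n'] hper; first by rewrite !big_ord0.
rewrite big_ord_recr big_ord_recl /= addrC; congr (_ + _).
  by rewrite -(hper 0) add0r -addn1 PoszD.
by apply: eq_bigr => i _; rewrite -PoszD addn1.
Qed.

Lemma sum_zperiodic_shift (h : int -> V) (c : int) : zperiodic n h ->
  \sum_(t < n) h (t%:Z + c) = \sum_(t < n) h t%:Z.
Proof.
have shift_nat (k : nat) : forall h : int -> V, zperiodic n h ->
    \sum_(t < n) h (t%:Z + k%:Z) = \sum_(t < n) h t%:Z.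
  elim: k => [|k IHk] h' hper; first by under eq_bigr do rewrite addr0.
  rewrite -(IHk _ hper) -(sum_zperiodic_shift1 (zperiodic_shift k%:Z hper)).
  by apply: eq_bigr => i _; congr h'; lia.
case: (posnP n) => [-> | n_gt0] hper; first by rewrite !big_ord0.
have n0 : n%:Z != 0 by rewrite -lt0n.
rewrite -(shift_nat `|(c %% n%:Z)%Z|%N h hper) gez0_abs ?modz_ge0 //.
by apply: eq_bigr => i _; rewrite {1}(divz_eq c n%:Z) addrA addrAC (zperiodicMz hper).
Qed.

End PeriodicSums.

Lemma corrE (n : nat) (a b : binseq) (c : int) :
  corr n a b c = \sum_(t < n) (-1) ^+ a t%:Z * (-1) ^+ b (t%:Z + c).
Proof. by apply: eq_bigr => t _; rewrite exprD. Qed.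

Lemma sum_sign_dbal (K : nat) (a : binseq) : \sum_(k < K) (-1) ^+ a k%:Z = - dbal K a.
Proof.
rewrite /dbal -sum1_card [in RHS]big_mkcond /= -[Posz _]intz sumMz mulr_sumr.
have -> : K%:Z = \sum_(k < K) 1 by rewrite sumr_const card_ord natz.
rewrite -sumrB -sumrN.
by apply: eq_bigr => k _; rewrite inE; case: (a _).
Qed.

Lemma acorr0 (n : nat) (a : binseq) : acorr n a 0 = n%:Z.
Proof.
rewrite /acorr corrE; under eq_bigr do rewrite addr0 -expr2 sqrr_sign.
by rewrite sumr_const card_ord natz.
Qed.

Section Correlation.
Variable n : nat.
Implicit Types (a b : binseq) (c : int).

Lemma corr_cmpll a b c : corr n (cmpl a) b c = - corr n a b c.
Proof. by rewrite !corrE -sumrN; apply: eq_bigr => t _; rewrite signrN mulNr. Qed.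

Lemma corr_cmplr a b c : corr n a (cmpl b) c = - corr n a b c.
Proof. by rewrite !corrE -sumrN; apply: eq_bigr => t _; rewrite signrN mulrN. Qed.

Lemma corr_Lshr a b c x : corr n a (Lsh x b) c = corr n a b (c + x).
Proof. by apply: eq_bigr => t _; rewrite /Lsh addrA. Qed.

Lemma corr_Lshl a b c x : periodic n a -> periodic n b ->
  corr n (Lsh x a) b c = corr n a b (c - x).
Proof.
move=> aper bper.
rewrite /corr -(sum_zperiodic_shift (h := fun t => (-1) ^+ (a t + b (t + (c - x))%R)%N) x).
  by apply: eq_bigr => t _; rewrite /Lsh addrA addrAC addrK.
by move=> t; rewrite aper addrAC bper.
Qed.

Lemma corr_sym a b c : periodic n a -> periodic n b ->
  corr n a b c = corr n b a (- c).
Proof.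
move=> aper bper.
rewrite /corr -(sum_zperiodic_shift (h := fun t => (-1) ^+ (b t + a (t - c)%R)%N) c).
  by apply: eq_bigr => t _; rewrite addrK addnC.
by move=> t; rewrite bper addrAC aper.
Qed.

Lemma corr_mod a b c c' : periodic n b -> (n%:Z %| c - c')%Z ->
  corr n a b c = corr n a b c'.
Proof.
move=> bper /dvdzP[k ck]; apply: eq_bigr => t _.
by rewrite -(subrK c' c) ck addrCA addrC (zperiodicMz bper).
Qed.

End Correlation.

Section Interleaving.
Variable m : nat.
Hypothesis m_gt0 : (0 < m)%N.

Lemma interleaveE (b : nat -> binseq) (x : int) (r : nat) : (r < m)%N ->
  interleave m b (x * m%:Z + r%:Z) = b r x.
Proof.
move=> r_lt_m; have m0 : m%:Z != 0 by rewrite -lt0n.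
rewrite /interleave divzMDl // modzMDl modz_small ?divz_small ?addr0 //;
  by rewrite !ler0z ltz_nat r_lt_m.
Qed.

Lemma interleave_periodic (k : nat) (b : nat -> binseq) :
  (forall j, (j < m)%N -> periodic k (b j)) -> periodic (k * m) (interleave m b).
Proof.
move=> bper t; have m0 : m%:Z != 0 by rewrite -lt0n.
rewrite /interleave PoszM addrC divzMDl // modzMDl addrC bper //.
by rewrite -ltz_nat gez0_abs ?modz_ge0 ?ltz_pmod.
Qed.

Lemma corr_interleave (n : nat) (b c : nat -> binseq) (q r : nat) :
  corr (m * n) (interleave m b) (interleave m c) (q * m + r)%N%:Z =
  \sum_(j < m) corr n (b j) (c ((j + r) %% m)%N) (q + (j + r) %/ m)%N%:Z.
Proof.
rewrite /corr (sum_ord_mul _ _ (fun t : nat => (-1) ^+ (interleave m b t%:Z +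
  interleave m c (t%:Z + (q * m + r)%N%:Z)%R)%N)) exchange_big /=.
apply: eq_bigr => j _; apply: eq_bigr => i _.
have carry : (i * m + j + (q * m + r) =
              (i + (q + (j + r) %/ m)) * m + (j + r) %% m)%N.
  by have := divn_eq (j + r) m; lia.
by rewrite -PoszD carry !PoszD !PoszM !interleaveE ?ltn_pmod.
Qed.

End Interleaving.

Lemma sum_ord_dvdn (V : nmodType) (K T : nat) (F : nat -> V) : (0 < T)%N ->
  \sum_(t < K * T | (T %| t)%N) F t = \sum_(k < K) F (k * T)%N.
Proof.
case: T => // T' _; rewrite big_mkcond /= mulnC (sum_ord_mul _ _ (fun t =>
  if (T'.+1 %| t)%N then F t else 0)); apply: eq_bigr => k _.
rewrite big_ord_recl /= addn0 dvdn_mull // big1 ?addr0 // => j _.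
by rewrite dvdn_addr ?dvdn_mull // /bump add1n gtnNdvd ?ltnS ?ltn_ord.
Qed.

Lemma resT_ge0 (T : nat) (c : int) : (0 < T)%N -> 0 <= resT T c.
Proof. by move=> T_gt0; rewrite modz_ge0 // -lt0n. Qed.

Lemma absz_resT_lt (T : nat) (c : int) : (0 < T)%N -> (`|resT T c| < T)%N.
Proof. by move=> T_gt0; rewrite -ltz_nat gez0_abs ?resT_ge0 ?ltz_pmod. Qed.

Lemma resT_lt (T : nat) (c : int) : (0 < T)%N -> resT T c < T%:Z.
Proof. by move=> T_gt0; rewrite ltz_pmod. Qed.

Lemma resTN (T : nat) (c : int) : (0 < T)%N ->
  resT T (- c) = if resT T c == 0 then 0 else T%:Z - resT T c.
Proof.
move=> T_gt0; rewrite /resT -modzNm; case: eqP => [-> | /eqP r0]; first exact: mod0z.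
rewrite -(modzDl _ T%:Z) modz_small //; apply/andP; split.
  by rewrite subr_ge0 ltW ?ltz_pmod.
by rewrite ltrBlDl -subr_gt0 addrK lt_def r0 modz_ge0 // -lt0n.
Qed.

Lemma resTMDl (T : nat) (k c : int) : resT T (k * T%:Z + c) = resT T c.
Proof. exact: modzMDl. Qed.

Section Construction.
Variables (K T : nat) (a : nat -> binseq).
Hypothesis T_gt0 : (0 < T)%N.
Hypothesis a_periodic : forall x, (0 < x < T)%N -> periodic K (a x).

Local Notation N := (K * T)%N.
Let s0 := interleave T (fun j => if j == 0%N then zeros else a j).
Let s1 := interleave T (fun j => if j == 0%N then ones else a j).

Let column_periodic (b0 : binseq) : periodic K b0 ->
  periodic N (interleave T (fun j => if j == 0%N then b0 else a j)).
Proof.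
move=> b0per; apply: interleave_periodic => // j j_lt_T.
by case: eqP => [// | /eqP j0]; apply: a_periodic; rewrite lt0n j0.
Qed.

Let s0_periodic : periodic N s0. Proof. exact: column_periodic. Qed.
Let s1_periodic : periodic N s1. Proof. exact: column_periodic. Qed.

Definition colsum (y : binseq) (c : int) : int :=
  \sum_(k < K) (-1) ^+ y (k%:Z * T%:Z + c).

Lemma sign_s1 t : (-1) ^+ s1 t = (-1) ^+ s0 t - 2 * (resT T t == 0)%:R :> int.
Proof.
by rewrite /s1 /s0 /interleave /resT absz_eq0; case: eqP => //=; rewrite subr0.
Qed.

Lemma colsum_s0 c :
  colsum s0 c = if resT T c == 0 then K%:Z else - dbal K (a `|resT T c|%N).
Proof.
have T0 : T%:Z != 0 by rewrite -lt0n.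
have colE k : k%:Z * T%:Z + c = (k%:Z + (c %/ T%:Z)%Z) * T%:Z + `|resT T c|%N%:Z.
  by rewrite gez0_abs ?resT_ge0 // {1}(divz_eq c T%:Z); ring.
rewrite /colsum /s0; under eq_bigr do rewrite colE interleaveE ?absz_resT_lt //.
rewrite absz_eq0; case: eqP => [_ | /eqP r0].
  by rewrite /= sumr_const card_ord natz.
rewrite (sum_zperiodic_shift (h := fun x => (-1) ^+ a `|resT T c|%N x)) ?sum_sign_dbal //.
by move=> x; rewrite a_periodic // absz_gt0 r0 absz_resT_lt.
Qed.

Lemma colsum_s1 c : colsum s1 c = colsum s0 c - 2 * K%:Z * (resT T c == 0)%:R.
Proof.
rewrite /colsum; under eq_bigr do rewrite sign_s1 resTMDl.
rewrite sumrB sumr_const card_ord; congr (_ - _).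
by rewrite -mulrnAl -mulr_natr !natz.
Qed.

Lemma corr_s1l y c : corr N s1 y c = corr N s0 y c - 2 * colsum y c.
Proof.
rewrite !corrE; under eq_bigr do rewrite sign_s1 mulrBl -mulrA.
rewrite sumrB -mulr_sumr; congr (_ - 2 * _).
rewrite (eq_bigr (fun t : 'I_N => if (T %| t)%N then (-1) ^+ y (t%:Z + c) else 0)).
  by rewrite -big_mkcond (sum_ord_dvdn K (fun t : nat => (-1) ^+ y (t%:Z + c))).
move=> t _; have -> : (resT T t%:Z == 0) = (T %| t)%N by rewrite /resT modz_nat.
by case: ifP; rewrite ?mul1r ?mul0r.
Qed.

Lemma corr_s1r y c : periodic N y ->
  corr N y s1 c = corr N y s0 c - 2 * colsum y (- c).
Proof.
by move=> yper; rewrite corr_sym // corr_s1l (corr_sym _ s0_periodic) ?opprK.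
Qed.

Variables (eta inv4 inv2 : int).
Hypothesis inv4P : (4 * inv4 == 1 %[mod N%:Z])%Z.
Hypothesis inv2P : (2 * inv2 == 1 %[mod N%:Z])%Z.

Let u := interleave 4 (fun j =>
  if j == 0%N then s1
  else if j == 1%N then cmpl (Lsh (inv4 + eta) s1)
  else if j == 2%N then cmpl (Lsh inv2 s0)
  else cmpl (Lsh (3 * inv4 + eta) s0)).

Let dvdN_lincomb (k l x : int) :
  x = k * (4 * inv4 - 1) + l * (inv2 - 2 * inv4) -> (N%:Z %| x)%Z.
Proof.
move=> ->; have := inv4P; have := inv2P; rewrite !eqz_mod_dvd => dvd2 dvd4.
have dvd_half : (N%:Z %| inv2 - 2 * inv4)%Z.
  have -> : inv2 - 2 * inv4 = - inv2 * (4 * inv4 - 1) + 2 * inv4 * (2 * inv2 - 1).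
    by ring.
  by rewrite rpredD ?dvdz_mull.
by rewrite rpredD ?dvdz_mull.
Qed.

Lemma acorr_u0 (m : nat) : acorr (4 * N) u (m * 4)%N%:Z =
  4 * acorr N s0 m%:Z - 4 * colsum s0 m%:Z - 4 * colsum s0 (- m%:Z)
  + 8 * K%:Z * (resT T m%:Z == 0)%:R.
Proof.
rewrite -[(m * 4)%N]addn0 /acorr corr_interleave // !big_ord_recr big_ord0 /divn /= !addn0.
rewrite !corr_cmpll !corr_cmplr !opprK !corr_Lshr !corr_Lshl // !addrK.
by rewrite corr_s1l corr_s1r // colsum_s1; ring.
Qed.

Lemma acorr_u1 (m : nat) : acorr (4 * N) u (m * 4 + 1)%N%:Z =
  2 * colsum s0 (- (inv4 + eta + m%:Z)) + 2 * colsum s0 (inv4 + eta + m%:Z)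
  - 4 * K%:Z * (resT T (inv4 + eta + m%:Z) == 0)%:R
  - 2 * colsum s0 (inv4 - eta + m%:Z) + 2 * colsum s0 (- (inv4 - eta + m%:Z)).
Proof.
set p := inv4 + eta + m%:Z; set q := inv4 - eta + m%:Z.
transitivity (- corr N s1 s1 p + corr N s1 s0 q + corr N s0 s0 p - corr N s0 s1 q).
  rewrite /acorr corr_interleave // !big_ord_recr big_ord0 /divn /= !addn0 add0r.
  rewrite !corr_cmpll !corr_cmplr !opprK !corr_Lshr !corr_Lshl //.
  congr (- _ + _ + _ - _); apply: corr_mod => //.
  - by apply: (dvdN_lincomb (k := 0) (l := 0)); lia.
  - by apply: (dvdN_lincomb (k := 0) (l := 1)); lia.
  - by apply: (dvdN_lincomb (k := 0) (l := -1)); lia.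
  - by apply: (dvdN_lincomb (k := -1) (l := 0)); lia.
by rewrite !corr_s1l !corr_s1r // colsum_s1; ring.
Qed.

Lemma acorr_u2 (m : nat) : acorr (4 * N) u (m * 4 + 2)%N%:Z = 0.
Proof.
set c := m%:Z + inv2; set c' := (m + 1)%N%:Z - inv2.
transitivity (- corr N s1 s0 c + corr N s1 s0 c - corr N s0 s1 c' + corr N s0 s1 c').
  rewrite /acorr corr_interleave // !big_ord_recr big_ord0 /divn /= !addn0 add0r.
  rewrite !corr_cmpll !corr_cmplr !opprK !corr_Lshr !corr_Lshl //.
  congr (- _ + _ - _ + _); apply: corr_mod => //.
  - by apply: (dvdN_lincomb (k := 0) (l := -1)); lia.
  - by apply: (dvdN_lincomb (k := 0) (l := 1)); lia.
by rewrite addNr add0r addNr.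
Qed.

Lemma acorr_u3 (m : nat) : acorr (4 * N) u (m * 4 + 3)%N%:Z =
  2 * colsum s0 (3 * inv4 + eta + m%:Z) + 2 * colsum s0 (- (3 * inv4 - eta + m%:Z))
  + 2 * colsum s0 (3 * inv4 - eta + m%:Z)
  - 4 * K%:Z * (resT T (3 * inv4 - eta + m%:Z) == 0)%:R
  - 2 * colsum s0 (- (3 * inv4 + eta + m%:Z)).
Proof.
set p := 3 * inv4 + eta + m%:Z; set q := 3 * inv4 - eta + m%:Z.
transitivity (- corr N s1 s0 p - corr N s1 s1 q + corr N s0 s1 p + corr N s0 s0 q).
  rewrite /acorr corr_interleave // !big_ord_recr big_ord0 /divn /= !addn0 add0r.
  rewrite !corr_cmpll !corr_cmplr !opprK !corr_Lshr !corr_Lshl //.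
  congr (- _ - _ + _ + _); apply: corr_mod => //.
  - by apply: (dvdN_lincomb (k := 0) (l := 0)); lia.
  - by apply: (dvdN_lincomb (k := -1) (l := 0)); lia.
  - by apply: (dvdN_lincomb (k := -1) (l := -1)); lia.
  - by apply: (dvdN_lincomb (k := -1) (l := 1)); lia.
by rewrite !corr_s1l !corr_s1r // colsum_s1; ring.
Qed.

Section BalancesConstant.
Variable c1 : int.
Hypothesis dbal_const : forall x, (0 < x < T)%N -> dbal K (a x) = c1.

Lemma colsum_s0_const c : colsum s0 c = if resT T c == 0 then K%:Z else - c1.
Proof.
rewrite colsum_s0; case: eqP => // /eqP r0.
by rewrite dbal_const // absz_gt0 r0 absz_resT_lt.
Qed.

Lemma colsum_s0N_const c : colsum s0 (- c) = colsum s0 c.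
Proof.
rewrite !colsum_s0_const resTN //; have [_ | r0] := eqVneq (resT T c) 0.
  by rewrite eqxx.
by rewrite subr_eq0 eq_sym (lt_eqF (resT_lt c T_gt0)).
Qed.

Lemma acorr_u0_const (m : nat) : acorr (4 * N) u (m * 4)%N%:Z =
  4 * acorr N s0 m%:Z + (if resT T m%:Z == 0 then 0 else 8 * c1).
Proof.
rewrite acorr_u0 colsum_s0N_const colsum_s0_const.
by case: (resT T m%:Z == 0) => /=; ring.
Qed.

Lemma acorr_u1_const (m : nat) : acorr (4 * N) u (m * 4 + 1)%N%:Z =
  if resT T (inv4 + eta + m%:Z) == 0 then 0 else - (4 * c1).
Proof.
rewrite acorr_u1 !colsum_s0N_const !colsum_s0_const.
by case: (resT T (inv4 + eta + m%:Z) == 0); case: (resT T (inv4 - eta + m%:Z) == 0);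
  rewrite /=; ring.
Qed.

Lemma acorr_u3_const (m : nat) : acorr (4 * N) u (m * 4 + 3)%N%:Z =
  if resT T (3 * inv4 - eta + m%:Z) == 0 then 0 else - (4 * c1).
Proof.
rewrite acorr_u3 !colsum_s0N_const !colsum_s0_const.
by case: (resT T (3 * inv4 + eta + m%:Z) == 0);
  case: (resT T (3 * inv4 - eta + m%:Z) == 0); rewrite /=; ring.
Qed.

End BalancesConstant.

Section BalancesOpposite.
Hypothesis dbal_opp : forall x, (0 < x < T)%N -> dbal K (a x) + dbal K (a (T - x)%N) = 0.

Lemma colsum_s0N_opp c :
  colsum s0 (- c) = if resT T c == 0 then K%:Z else - colsum s0 c.
Proof.
rewrite !colsum_s0 resTN //; have [_ | r0] := eqVneq (resT T c) 0.
  by rewrite eqxx.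
rewrite subr_eq0 eq_sym (lt_eqF (resT_lt c T_gt0)).
have r_range : (0 < `|resT T c| < T)%N by rewrite absz_gt0 r0 absz_resT_lt.
have -> : `|T%:Z - resT T c|%N = (T - `|resT T c|)%N.
  by have := resT_ge0 c T_gt0; have := resT_lt c T_gt0; lia.
by rewrite opprK; apply/eqP; rewrite eqr_oppLR -subr_eq0 opprK addrC dbal_opp.
Qed.
Lemma acorr_u0_opp (m : nat) : acorr (4 * N) u (m * 4)%N%:Z = 4 * acorr N s0 m%:Z.
Proof.
rewrite acorr_u0 colsum_s0N_opp colsum_s0.
by case: (resT T m%:Z == 0) => /=; ring.
Qed.

Lemma acorr_u1_opp (m : nat) : acorr (4 * N) u (m * 4 + 1)%N%:Z =
  if resT T (inv4 - eta + m%:Z) == 0 then 0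
  else 4 * dbal K (a `|resT T (inv4 - eta + m%:Z)|%N).
Proof.
rewrite acorr_u1 !colsum_s0N_opp !colsum_s0.
by case: (resT T (inv4 + eta + m%:Z) == 0); case: (resT T (inv4 - eta + m%:Z) == 0);
  rewrite /=; ring.
Qed.

Lemma acorr_u3_opp (m : nat) : acorr (4 * N) u (m * 4 + 3)%N%:Z =
  if resT T (3 * inv4 + eta + m%:Z) == 0 then 0
  else - (4 * dbal K (a `|resT T (3 * inv4 + eta + m%:Z)|%N)).
Proof.
rewrite acorr_u3 !colsum_s0N_opp !colsum_s0.
by case: (resT T (3 * inv4 + eta + m%:Z) == 0);
  case: (resT T (3 * inv4 - eta + m%:Z) == 0); rewrite /=; ring.
Qed.

End BalancesOpposite.



End Construction.


Theorem theorem3 (K T : nat) (eta inv4 inv2 : int) (a : nat -> binseq) :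
  (1 <= K)%N -> (2 <= T)%N -> odd (K * T) ->
  (4 * inv4 == 1 %[mod (K * T)%:Z])%Z ->
  (2 * inv2 == 1 %[mod (K * T)%:Z])%Z ->
  (forall x : nat, (0 < x < T)%N -> periodic K (a x)) ->
  let N := (K * T)%N in
  let s := interleave T (fun j => if j == 0%N then zeros else a j) in
  let s' := interleave T (fun j => if j == 0%N then ones else a j) in
  let u := interleave 4 (fun j =>
             if j == 0%N then s'
             else if j == 1%N then cmpl (Lsh (inv4 + eta)%R s')
             else if j == 2%N then cmpl (Lsh inv2 s)
             else cmpl (Lsh (3 * inv4 + eta)%R s)) in
  (forall c1 : int,
     (forall x : nat, (0 < x < T)%N -> dbal K (a x) = c1) ->
     forall mu : nat, (mu < 4 * N)%N ->
       let mu1 := (mu %/ 4)%N in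
       let mu2 := (mu %% 4)%N in
       let tau2 := resT T mu1%:Z in
       let tau1p := resT T (inv4 + eta + mu1%:Z) in
       let tau2m := resT T (3 * inv4 - eta + mu1%:Z) in
       let R := acorr (4 * N) u mu%:Z in
       ((mu = 0%N -> R = 4 * (K * T)%:Z) /\
           (mu2 = 0%N -> tau2 = 0 -> mu <> 0%N -> R = 4 * acorr N s mu1%:Z) /\
           (mu2 = 0%N -> tau2 <> 0 -> R = 4 * acorr N s mu1%:Z + 8 * c1) /\
           (mu2 = 1%N -> tau1p = 0 -> R = 0) /\
           (mu2 = 1%N -> tau1p <> 0 -> R = - (4 * c1)) /\
           (mu2 = 2%N -> R = 0) /\
           (mu2 = 3%N -> tau2m = 0 -> R = 0) /\
           (mu2 = 3%N -> tau2m <> 0 -> R = - (4 * c1))))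
  /\
  ((forall x : nat, (0 < x < T)%N -> dbal K (a x) + dbal K (a (T - x)%N) = 0) ->
     forall mu : nat, (mu < 4 * N)%N ->
       let mu1 := (mu %/ 4)%N in
       let mu2 := (mu %% 4)%N in
       let tau1m := resT T (inv4 - eta + mu1%:Z) in
       let tau2p := resT T (3 * inv4 + eta + mu1%:Z) in
       let R := acorr (4 * N) u mu%:Z in
       ((mu = 0%N -> R = 4 * (K * T)%:Z) /\
           (mu2 = 0%N -> mu <> 0%N -> R = 4 * acorr N s mu1%:Z) /\
           (mu2 = 1%N -> tau1m = 0 -> R = 0) /\
           (mu2 = 1%N -> tau1m <> 0 -> R = 4 * dbal K (a `|tau1m|%N)) /\
           (mu2 = 2%N -> R = 0) /\
           (mu2 = 3%N -> tau2p = 0 -> R = 0) /\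
           (mu2 = 3%N -> tau2p <> 0 -> R = - (4 * dbal K (a `|tau2p|%N))))).
Proof.
move=> _ T_ge2 _ inv4P inv2P a_per N s s' u.
have T_gt0 : (0 < T)%N by apply: ltnW.
have muE (mu r : nat) : (mu %% 4 = r)%N -> mu = (mu %/ 4 * 4 + r)%N.
  by move=> <-; exact: divn_eq.
have u2 := acorr_u2 T_gt0 a_per eta inv4P inv2P.
split=> [c1 dbalE | dbalE] mu _ mu1 mu2.
- have u0 := acorr_u0_const T_gt0 a_per eta inv4 inv2 dbalE.
  have u1 := acorr_u1_const T_gt0 a_per eta inv4P inv2P dbalE.
  have u3 := acorr_u3_const T_gt0 a_per eta inv4P inv2P dbalE.
  move=> tau2 tau1p tau2m R; rewrite /R.
  split; first by move=> ->; rewrite -(mul0n 4) u0 acorr0 /resT mod0z eqxx addr0.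
  split; first by move=> /muE -> /eqP t0 _; rewrite addn0 u0 t0 addr0.
  split; first by move=> /muE -> /eqP t0; rewrite addn0 u0 (negPf t0).
  split; first by move=> /muE -> /eqP t0; rewrite u1 t0.
  split; first by move=> /muE -> /eqP t0; rewrite u1 (negPf t0).
  split; first by move=> /muE ->; rewrite u2.
  split; first by move=> /muE -> /eqP t0; rewrite u3 t0.
  by move=> /muE -> /eqP t0; rewrite u3 (negPf t0).
- have u0 := acorr_u0_opp T_gt0 a_per eta inv4P inv2P dbalE.
  have u1 := acorr_u1_opp T_gt0 a_per eta inv4P inv2P dbalE.
  have u3 := acorr_u3_opp T_gt0 a_per eta inv4P inv2P dbalE.
  move=> tau1m tau2p R; rewrite /R.
  split; first by move=> ->; rewrite -(mul0n 4) u0 acorr0.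
  split; first by move=> /muE -> _; rewrite addn0 u0.
  split; first by move=> /muE -> /eqP t0; rewrite u1 t0.
  split; first by move=> /muE -> /eqP t0; rewrite u1 (negPf t0).
  split; first by move=> /muE ->; rewrite u2.
  split; first by move=> /muE -> /eqP t0; rewrite u3 t0.
  by move=> /muE -> /eqP t0; rewrite u3 (negPf t0).
Qed.
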